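(* Let $\hat{\mathcal H}$ be a graph on vertex set $[n]$ with at least one edge that is partially shifted and triangle-free. Then there exist disjoint nonempty sets $X,Y\subset[n]$ with $X\cup Y=[|X|+|Y|]$ such that the edge set of $\hat{\mathcal H}$ is exactly $\{\{x,y\}:x\in X,\ y\in Y\}$.
   Context: A graph $\hat{\mathcal H}$ on $[n]$ is partially shifted if for all distinct $i,j,x\in[n]$ with $x<j$: if $\{i,j\}$ is an edge and $\{x,j\}$ is not an edge, then $\{i,x\}$ is an edge. *)

From mathcomp Require Import all_boot.
Set Implicit Arguments. Unset Strict Implicit. Unset Printing Implicit Defensive.

(* A simple graph on [n] = {1,...,n} is a symmetric irreflexive relation
   e : rel 'I_n ; the ordinal i : 'I_n stands for the vertex i+1, so the
   natural order on vertices is the order on ordinals, and the initial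
   segment [k] = {1,...,k} is {i : 'I_n | i < k}. *)
Definition simple_graph n (e : rel 'I_n) : Prop :=
  symmetric e /\ irreflexive e.

Definition partially_shifted n (e : rel 'I_n) : Prop :=
  forall i j x : 'I_n, i != j -> i != x -> x != j -> x < j ->
    e i j -> ~~ e x j -> e i x.

Definition triangle_free n (e : rel 'I_n) : Prop :=
  forall a b c : 'I_n, ~ [&& e a b, e b c & e a c].

Definition has_edge n (e : rel 'I_n) : Prop := exists u v : 'I_n, e u v.

Definition is_initial_segment n (S : {set 'I_n}) (k : nat) : Prop :=
  forall v : 'I_n, (v \in S) = (v < k).

From mathcomp Require Import all_boot.

Set Implicit Arguments.
Unset Strict Implicit.
Unset Printing Implicit Defensive.

(* Let m be the largest vertex that has a neighbour and a some neighbour of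
   m.  Shifting the edge {a, m} down to each x < m shows that every x <= m is
   adjacent to m or to a; by triangle-freeness the two neighbourhoods are
   disjoint, independent sets.  Shifting an edge {u, m} down to a neighbour v
   of a gives the edge {u, v}, so the graph is complete bipartite between
   N(m) and N(a), whose union is [m + 1]. *)

Lemma card_set_ltn_ord n k : k <= n -> #|[set v : 'I_n | v < k]| = k.
Proof.
move=> le_kn.
have -> : [set v : 'I_n | v < k] = [set widen_ord le_kn i | i : 'I_k].
  apply/setP=> v; rewrite inE; apply/idP/imsetP.
    by move=> lt_vk; exists (Ordinal lt_vk) => //; apply/val_inj.
  by case=> i _ ->; rewrite /= ltn_ord.
rewrite card_imset ?card_ord // => i j /(congr1 val) /= eq_ij.
exact/val_inj.
Qed.

Section ShiftedTriangleFree.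

Variables (n : nat) (e : rel 'I_n).
Hypotheses (e_sym : symmetric e) (e_irr : irreflexive e).
Hypotheses (e_shifted : partially_shifted e) (e_tfree : triangle_free e).

Lemma no_triangle u v w : e u v -> e v w -> e u w -> False.
Proof. by move=> euv evw euw; have := @e_tfree u v w; rewrite euv evw euw. Qed.

Lemma edge_neq u v : e u v -> u != v.
Proof. by apply: contraTneq => ->; rewrite e_irr. Qed.

Variables (m a : 'I_n).
Hypothesis e_am : e a m.
Hypothesis edge_le_top : forall u v, e u v -> u <= m.

Lemma edge_le_top_r u v : e u v -> v <= m.
Proof. by rewrite e_sym; apply: edge_le_top. Qed.

Lemma adj_top_or_partner (x : 'I_n) : x <= m -> e m x || e a x.
Proof.
move=> le_xm; have [->|ne_xm] := eqVneq x m; first by rewrite e_am orbT.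
have [->|ne_xa] := eqVneq x a; first by rewrite e_sym e_am.
case e_mx : (e m x) => //=.
apply: (@e_shifted a m x) => //.
- exact: edge_neq e_am.
- by rewrite eq_sym.
- by rewrite ltn_neqAle le_xm andbT.
- by rewrite e_sym e_mx.
Qed.

Lemma adj_top_partner_disjoint x : e m x -> e a x -> False.
Proof. by move=> e_mx e_ax; apply: (no_triangle e_am e_mx). Qed.

Lemma adj_top_adj_partner u v : e m u -> e a v -> e u v.
Proof.
move=> e_mu e_av; have [->|ne_vm] := eqVneq v m; first by rewrite e_sym.
apply: (@e_shifted u m v) => //; last 2 first.
- by rewrite e_sym.
- by apply/negP; rewrite e_sym => e_mv; apply: (adj_top_partner_disjoint e_mv).
- by rewrite eq_sym edge_neq.
- by apply: contraTneq e_av => <-; apply/negP; apply: adj_top_partner_disjoint.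
- by rewrite ltn_neqAle (edge_le_top_r e_av) andbT.
Qed.

Lemma edge_across u v :
  e u v <-> (e m u /\ e a v) \/ (e a u /\ e m v).
Proof.
split=> [e_uv|[[e_mu e_av]|[e_au e_mv]]]; last 2 first.
- exact: adj_top_adj_partner.
- by rewrite e_sym; apply: adj_top_adj_partner.
have /orP[e_mu|e_au] := adj_top_or_partner (edge_le_top e_uv);
  have /orP[e_mv|e_av] := adj_top_or_partner (edge_le_top_r e_uv).
- by case: (no_triangle e_mu e_uv e_mv).
- by left.
- by right.
- by case: (no_triangle e_au e_uv e_av).
Qed.

Lemma adj_top_partner_cover :
  [set v | e m v] :|: [set v | e a v] = [set v : 'I_n | v < m.+1].
Proof.
apply/setP=> v; rewrite !inE ltnS; apply/idP/idP; last exact: adj_top_or_partner.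
by case/orP; apply: edge_le_top_r.
Qed.

Lemma adj_top_partner_cap : [set v | e m v] :&: [set v | e a v] = set0.
Proof.
apply/setP=> v; rewrite !inE; apply/negbTE/negP => /andP[e_mv e_av].
exact: (adj_top_partner_disjoint e_mv).
Qed.

End ShiftedTriangleFree.

Theorem lemma1p2 (n : nat) (e : rel 'I_n) :
  simple_graph e -> has_edge e -> partially_shifted e -> triangle_free e ->
  exists X Y : {set 'I_n},
    [/\ [disjoint X & Y], X != set0, Y != set0,
        is_initial_segment (X :|: Y) (#|X| + #|Y|) &
        forall u v : 'I_n,
          e u v <-> (u \in X /\ v \in Y) \/ (u \in Y /\ v \in X)].
Proof.
move=> [e_sym e_irr] [u0 [v0 e_uv0]] e_shifted e_tfree.
pose has_nbr v := [exists w, e v w].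
have has_nbr_u0 : has_nbr u0 by apply/existsP; exists v0.
have [m /existsP[a e_ma] m_max] := arg_maxnP (fun i : 'I_n => val i) has_nbr_u0.
have e_am : e a m by rewrite e_sym.
have edge_le_m u v : e u v -> u <= m.
  by move=> e_uv; apply: m_max; apply/existsP; exists v.
have cover := adj_top_partner_cover e_sym e_irr e_shifted e_am edge_le_m.
have cap := adj_top_partner_cap e_tfree e_am.
exists [set v | e m v], [set v | e a v]; split.
- by rewrite -setI_eq0 cap.
- by apply/set0Pn; exists a; rewrite inE.
- by apply/set0Pn; exists m; rewrite inE.
- rewrite -cardsUI cap cards0 addn0 cover card_set_ltn_ord ?ltn_ord //.
  by move=> v; rewrite inE.
- by move=> u v; rewrite !inE; apply: edge_across.
Qed.
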